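(* Let $\mathbf H_\Lambda(0)$ and $\mathbf H_\Lambda(1)$ be quadratic and strictly positive Hamiltonians on $\mathcal F(\mathbb C^L)$, with associated real skew-symmetric matrices $A_\Lambda(0)$, $A_\Lambda(1)$. Then $j(\mathbf H_\Lambda(0))=j(\mathbf H_\Lambda(1))$ if and only if $\mathrm{Sf}_2(A_\Lambda(0),A_\Lambda(1))=1$.
   Context: $\mathcal F(\mathbb C^L)$ is the fermionic Fock space over $\Lambda=\{1,\dots,L\}$ with creation/annihilation operators ${\mathfrak a}_j^*,{\mathfrak a}_j$ satisfying the CAR. Fix $\theta\in\mathbb R$ and define Majorana operators ${\mathfrak b}_{2j-1}=e^{i\theta/2}{\mathfrak a}_j+e^{-i\theta/2}{\mathfrak a}_j^*$, ${\mathfrak b}_{2j}=-ie^{i\theta/2}{\mathfrak a}_j+ie^{-i\theta/2}{\mathfrak a}_j^*$, and the column vector ${\mathfrak b}=({\mathfrak b}_1,{\mathfrak b}_3,\dots,{\mathfrak b}_{2L-1},{\mathfrak b}_2,{\mathfrak b}_4,\dots,{\mathfrak b}_{2L})^t$. A quadratic Hamiltonian $\mathbf H_\Lambda=\sum_{j,k}h_{jk}{\mathfrak a}_j^*{\mathfrak a}_k+\tilde h_{jk}{\mathfrak a}_j{\mathfrak a}_k+\text{adjoint}$ can be written (up to an additive constant) as $\mathbf H_\Lambda=\frac i2{\mathfrak b}^tA_\Lambda{\mathfrak b}$ with a unique real skew-symmetric $2L\times2L$ matrix $A_\Lambda$. It is strictly positive if $A_\Lambda$ is invertible (equivalently, all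 single-particle energies $E_j$ in the normal form $VA_\Lambda V^*=\begin{pmatrix}0&E\\-E&0\end{pmatrix}$, $V$ orthogonal, $E=\mathrm{diag}(E_1,\dots,E_L)\ge0$, are strictly positive). Kitaev index: $j(\mathbf H_\Lambda)=\mathrm{sgn}\,\mathrm{Pf}(A_\Lambda)$. Finite-dimensional $\mathbb Z_2$-valued spectral flow: for invertible real skew-symmetric matrices $T_0,T_1$, choose an invertible real $M$ with $T_1=MT_0M^*$ and set $\mathrm{Sf}_2(T_0,T_1)=\mathrm{sgn}\det(M)$. *)

From HB Require Import structures.
From mathcomp Require Import all_boot all_order all_algebra .
From mathcomp Require Import fingroup perm.
From mathcomp Require Import reals.
From Stdlib Require Import ClassicalEpsilon.
Set Implicit Arguments. Unset Strict Implicit. Unset Printing Implicit Defensive.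
Import Order.TTheory GRing.Theory Num.Theory.
Local Open Scope ring_scope.

Definition ord_succ (m : nat) (i : 'I_m) : 'I_m := insubd i i.+1.

(* Pfaffian of an (m x m) matrix, m = 2n, indices paired as (0,1),(2,3),...:
   Pf A = 1/(2^n n!) * sum_{s in S_2n} sgn(s) prod_{i<n} A_{s(2i), s(2i+1)} *)
Definition pfaffian (R : comUnitRingType) (m : nat) (A : 'M[R]_m) : R :=
  (\sum_(s : 'S_m) (-1) ^+ s *
     \prod_(i < m | ~~ odd i) A (s i) (s (ord_succ i)))
  / ((2 ^ (m./2))%N%:R * ((m./2)`!)%:R).

Definition skew_sym (R : realType) (m : nat) (A : 'M[R]_m) : Prop := A^T = - A.

(* strict positivity of the quadratic Hamiltonian H = (i/2) b^t A b *)
Definition strictly_positive (R : realType) (m : nat) (A : 'M[R]_m) : Prop :=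
  A \in unitmx.

Definition kitaev_index (R : realType) (m : nat) (A : 'M[R]_m) : R :=
  Num.sg (pfaffian A).

Definition Sf2 (R : realType) (m : nat) (T0 T1 : 'M[R]_m) : R :=
  Num.sg (\det (epsilon (inhabits (0 : 'M[R]_m))
     (fun M => M \in unitmx /\ T1 = M *m T0 *m M^T))).

(* Write Pf A = pf_sum A / (2^L L!), with pf_sum the unnormalised sum over all
   permutations of {0, ..., 2L-1}.  Expanding the entries of M A M^T and grouping
   the column selections that are permutations gives
   pf_sum (M A M^T) = det M * pf_sum A; the other selections contribute
   determinants with two equal columns.  Any two invertible skew-symmetric
   matrices of the same size are congruent (split off a 2x2 block by a Schur
   complement and induct), so the matrix M defining Sf2 exists and
   Pf A1 = det M * Pf A0.  Moreover Pf A0 <> 0: A0 is congruent to the standard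
   symplectic matrix J, and every term of pf_sum J is 0 or 1, because a nonzero
   term comes from a permutation preserving the pairs {2k, 2k+1}, and such a
   permutation is reduced to the identity by flipping and swapping pairs, moves
   that leave the terms of a skew-symmetric matrix unchanged.  Hence
   sgn Pf A1 = sgn det M * sgn Pf A0, and the two Kitaev indices agree iff
   sgn det M = 1. *)

From mathcomp Require Import all_boot all_order all_algebra.
From mathcomp Require Import fingroup perm.
From mathcomp Require Import reals.
From mathcomp Require Import zify.
From Stdlib Require Import ClassicalEpsilon.
Set Implicit Arguments. Unset Strict Implicit. Unset Printing Implicit Defensive.
Import Order.TTheory GRing.Theory Num.Theory.
Local Open Scope ring_scope.

Section PairedIndices.
Variable L : nat.
Local Notation m := (2 * L)%N.

Lemma ev_subproof (k : 'I_L) : (2 * k < m)%N.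
Proof. have := ltn_ord k; lia. Qed.

Lemma od_subproof (k : 'I_L) : ((2 * k).+1 < m)%N.
Proof. have := ltn_ord k; lia. Qed.

Lemma pair_idx_subproof (i : 'I_m) : (i./2 < L)%N.
Proof.
have := ltn_ord i; rewrite -{1}(odd_double_half i).
by case: (odd i) => /=; lia.
Qed.

Definition ev (k : 'I_L) : 'I_m := Ordinal (ev_subproof k).
Definition od (k : 'I_L) : 'I_m := Ordinal (od_subproof k).
Definition pair_idx (i : 'I_m) : 'I_L := Ordinal (pair_idx_subproof i).

Lemma pair_idx_ev k : pair_idx (ev k) = k.
Proof. by apply: val_inj => /=; lia. Qed.

Lemma pair_idx_od k : pair_idx (od k) = k.
Proof. by apply: val_inj => /=; lia. Qed.

Lemma odd_ev k : odd (ev k) = false.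
Proof. by rewrite /= oddM. Qed.

Lemma odd_od k : odd (od k) = true.
Proof. by rewrite /= oddM. Qed.

Lemma ev_pair_idx (i : 'I_m) : ~~ odd i -> ev (pair_idx i) = i.
Proof. by move=> ei; apply: val_inj => /=; rewrite -{2}(odd_double_half i) (negPf ei); lia. Qed.

Lemma od_pair_idx (i : 'I_m) : odd i -> od (pair_idx i) = i.
Proof. by move=> oi; apply: val_inj => /=; rewrite -{2}(odd_double_half i) oi; lia. Qed.

Lemma pair_ind (P : 'I_m -> Prop) :
  (forall k, P (ev k)) -> (forall k, P (od k)) -> forall i, P i.
Proof.
move=> Pev Pod i; have [oi|ei] := boolP (odd i).
  by rewrite -(od_pair_idx oi).
by rewrite -(ev_pair_idx ei).
Qed.

Lemma ev_inj : injective ev.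
Proof. by move=> a b /(congr1 pair_idx); rewrite !pair_idx_ev. Qed.

Lemma od_inj : injective od.
Proof. by move=> a b /(congr1 pair_idx); rewrite !pair_idx_od. Qed.

Lemma ev_neq_od a b : ev a != od b.
Proof. by apply/eqP => /(congr1 (fun i : 'I_m => odd i)); rewrite odd_ev odd_od. Qed.

Lemma od_neq_ev a b : od a != ev b.
Proof. by rewrite eq_sym ev_neq_od. Qed.

Lemma ord_succ_ev k : ord_succ (ev k) = od k.
Proof. by apply: val_inj; rewrite /ord_succ val_insubd /= od_subproof. Qed.

Section BigPairs.
Variables (R : Type) (idx : R) (op : Monoid.com_law idx).

Lemma big_even (F : 'I_m -> R) :
  \big[op/idx]_(i < m | ~~ odd i) F i = \big[op/idx]_(k < L) F (ev k).
Proof.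
rewrite (reindex_onto ev pair_idx); last exact: ev_pair_idx.
by apply: eq_bigl => k; rewrite odd_ev pair_idx_ev eqxx.
Qed.

Lemma big_odd (F : 'I_m -> R) :
  \big[op/idx]_(i < m | odd i) F i = \big[op/idx]_(k < L) F (od k).
Proof.
rewrite (reindex_onto od pair_idx); last exact: od_pair_idx.
by apply: eq_bigl => k; rewrite odd_od pair_idx_od eqxx.
Qed.

Lemma big_pairs (F : 'I_m -> R) :
  \big[op/idx]_(i < m) F i = \big[op/idx]_(k < L) op (F (ev k)) (F (od k)).
Proof.
by rewrite (bigID (fun i : 'I_m => odd i)) /= Monoid.mulmC big_even big_odd big_split.
Qed.

End BigPairs.

Definition mate (i : 'I_m) : 'I_m := if odd i then ev (pair_idx i) else od (pair_idx i).

Lemma mate_ev k : mate (ev k) = od k.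
Proof. by rewrite /mate odd_ev pair_idx_ev. Qed.

Lemma mate_od k : mate (od k) = ev k.
Proof. by rewrite /mate odd_od pair_idx_od. Qed.

Lemma mateK : involutive mate.
Proof. by move=> i; elim/pair_ind: i => k; rewrite ?(mate_ev, mate_od). Qed.

Lemma odd_mate i : odd (mate i) = ~~ odd i.
Proof. by elim/pair_ind: i => k; rewrite ?mate_ev ?mate_od ?odd_ev ?odd_od. Qed.

End PairedIndices.

Section PairMoves.
Variable L : nat.
Local Notation m := (2 * L)%N.

Definition flip_pair (c : 'I_L) : 'S_m := tperm (ev c) (od c).
Definition swap_pairs (c k : 'I_L) : 'S_m := (tperm (ev c) (ev k) * tperm (od c) (od k))%g.

Lemma flip_pair_ev c j : flip_pair c (ev j) = if j == c then od c else ev j.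
Proof.
rewrite /flip_pair; have [->|jc] := eqVneq j c; first by rewrite tpermL.
by rewrite tpermD // 1?eq_sym ?ev_neq_od // (inj_eq (@ev_inj _)).
Qed.

Lemma flip_pair_od c j : flip_pair c (od j) = if j == c then ev c else od j.
Proof.
rewrite /flip_pair; have [->|jc] := eqVneq j c; first by rewrite tpermR.
by rewrite tpermD // ?ev_neq_od // (inj_eq (@od_inj _)) eq_sym.
Qed.

Lemma swap_pairs_ev c k j : swap_pairs c k (ev j) = ev (tperm c k j).
Proof. by rewrite permM -inj_tperm ?(tpermD (x := od c)) ?od_neq_ev //; exact: ev_inj. Qed.

Lemma swap_pairs_od c k j : swap_pairs c k (od j) = od (tperm c k j).
Proof. by rewrite permM (tpermD (x := ev c)) ?ev_neq_od // inj_tperm //; exact: od_inj. Qed.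

Lemma odd_flip_pair c : odd_perm (flip_pair c).
Proof. by rewrite odd_tperm ev_neq_od. Qed.

Lemma odd_swap_pairs c k : ~~ odd_perm (swap_pairs c k).
Proof. by rewrite odd_permM !odd_tperm !(inj_eq (@ev_inj _), inj_eq (@od_inj _)) addbb. Qed.

Definition respects_pairs (s : 'S_m) := forall i, s (mate i) = mate (s i).

Lemma respects_pairsM s t :
  respects_pairs s -> respects_pairs t -> respects_pairs (s * t)%g.
Proof. by move=> Ps Pt i; rewrite !permM Ps Pt. Qed.

Lemma respects_pairs_flip c : respects_pairs (flip_pair c).
Proof.
elim/pair_ind => j; rewrite ?(mate_ev, mate_od) flip_pair_ev flip_pair_od;
  by case: eqP; rewrite ?(mate_ev, mate_od).
Qed.

Lemma respects_pairs_swap c k : respects_pairs (swap_pairs c k).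
Proof.
by elim/pair_ind => j; rewrite ?(mate_ev, mate_od) swap_pairs_ev swap_pairs_od ?(mate_ev, mate_od).
Qed.

Definition moved (s : 'S_m) := [set j | s (ev j) != ev j].

Lemma respects_pairs_unmoved s : respects_pairs s -> moved s = set0 -> s = 1%g.
Proof.
move=> Ps s0; have fix_ev j : s (ev j) = ev j.
  by have := in_set0 j; rewrite -s0 inE => /negbFE/eqP.
by apply/permP; elim/pair_ind => j; rewrite perm1 // -mate_ev Ps fix_ev.
Qed.

End PairMoves.

Lemma skew_entry (R : zmodType) n (A : 'M[R]_n) i j : A^T = - A -> A j i = - A i j.
Proof. by move/matrixP/(_ i j); rewrite !mxE. Qed.

Section PfaffianTerms.
Variables (R : comPzRingType) (L : nat).
Local Notation m := (2 * L)%N.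
Implicit Types (A : 'M[R]_m) (s t : 'S_m).

Definition pf_term A s : R := (-1) ^+ s * \prod_(k < L) A (s (ev k)) (s (od k)).

Lemma pf_term_swap A c k s : pf_term A (swap_pairs c k * s) = pf_term A s.
Proof.
rewrite /pf_term odd_permM (negPf (odd_swap_pairs c k)) /=; congr (_ * _).
under eq_bigr => j _ do rewrite !(permM _ s) swap_pairs_ev swap_pairs_od.
by rewrite (reindex_perm (tperm c k)); under eq_bigr => j _ do rewrite tpermK.
Qed.

Lemma pf_term_flip A c s : A^T = - A -> pf_term A (flip_pair c * s) = pf_term A s.
Proof.
move=> skA; rewrite /pf_term odd_permM odd_flip_pair signr_addb expr1 mulN1r.
rewrite (bigD1 c) //= [in RHS](bigD1 c) //= !permM flip_pair_ev flip_pair_od eqxx.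
rewrite (skew_entry _ _ skA) mulNr mulNr mulrN opprK; congr (_ * (_ * _)).
by apply: eq_bigr => k /negPf kc; rewrite !permM flip_pair_ev flip_pair_od kc.
Qed.

Definition pf_sum A : R := \sum_s pf_term A s.

Section PairRespecting.
Variable A : 'M[R]_m.
Hypothesis skA : A^T = - A.

Lemma moved_step s c : respects_pairs s -> c \in moved s ->
  exists t, [/\ pf_term A (t * s) = pf_term A s, respects_pairs (t * s)
              & moved (t * s) \proper moved s].
Proof.
rewrite inE => Ps cs; set x := (s^-1)%g (ev c); set k := pair_idx x.
have sx : s x = ev c by rewrite permKV.
have x_pair : x = if odd x then od k else ev k.
  by case: ifP => ox; rewrite ?od_pair_idx ?ev_pair_idx ?ox.
(* [t] sends [ev c] to [x = s^-1 (ev c)], so [t * s] fixes [ev c]. *)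
pose t := (swap_pairs c k * if odd x then flip_pair k else 1)%g.
have tc : t (ev c) = x.
  rewrite permM swap_pairs_ev tpermL {2}x_pair.
  by case: (odd x); rewrite ?perm1 // flip_pair_ev eqxx.
have tj j : j != c -> j != k -> t (ev j) = ev j.
  move=> jc jk; rewrite permM swap_pairs_ev tpermD 1?eq_sym //.
  by case: (odd x); rewrite ?perm1 // flip_pair_ev (negPf jk).
have ks : s (ev k) != ev k.
  apply: contra cs => /eqP sk; have fix_x : s x = x.
    by rewrite x_pair; case: (odd x); rewrite // -mate_ev Ps sk mate_ev.
  by rewrite -{1}sx fix_x sx.
exists t; split.
- rewrite -mulgA pf_term_swap.
  by case: (odd x); rewrite ?mul1g // pf_term_flip.
- apply: respects_pairsM => //; apply: respects_pairsM; first exact: respects_pairs_swap.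
  by case: (odd x); [exact: respects_pairs_flip | move=> i; rewrite !perm1].
- apply/properP; split; last first.
    by exists c; rewrite inE // negbK (permM t s) tc sx.
  apply/subsetP => j; rewrite !inE (permM t s).
  have [->|jc] := eqVneq j c; first by rewrite tc sx eqxx.
  have [->|jk] := eqVneq j k; first by [].
  by rewrite tj.
Qed.

Lemma pf_term_respects_pairs s : respects_pairs s -> pf_term A s = pf_term A 1.
Proof.
move: {2}#|moved s| (leqnn #|moved s|) => n; elim: n s => [|n IH] s le_sn Ps.
  by rewrite (respects_pairs_unmoved Ps) //; apply/cards0_eq/eqP; rewrite -leqn0.
have [s0|[c cs]] := set_0Vmem (moved s); first by rewrite (respects_pairs_unmoved Ps).
have [t [<- Pts lt_ts]] := moved_step Ps cs.
by apply: IH Pts; rewrite -ltnS; apply: leq_trans le_sn; apply: proper_card.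
Qed.

End PairRespecting.
End PfaffianTerms.

Section StandardSymplectic.
Variables (R : numDomainType) (L : nat).
Local Notation m := (2 * L)%N.

Definition symplectic_mx : 'M[R]_m :=
  \matrix_(i, j) if j == mate i then (-1) ^+ odd i else 0.
Local Notation J := symplectic_mx.

Lemma symplectic_mx_skew : J^T = - J.
Proof.
apply/matrixP => i j; rewrite !mxE.
have -> : (i == mate j) = (j == mate i) by apply/eqP/eqP => ->; rewrite mateK.
by case: eqP => [->|_]; rewrite ?oppr0 // odd_mate signrN.
Qed.

Lemma symplectic_mx_sqr : J *m J = - 1%:M.
Proof.
apply/matrixP => i j; rewrite !mxE (bigD1 (mate i)) //= big1 ?addr0; last first.
  by move=> l /negPf nl; rewrite !mxE nl mul0r.
rewrite !mxE eqxx mateK odd_mate signrN eq_sym.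
by case: eqP => _; rewrite ?mulr0 ?oppr0 // mulrN -expr2 sqrr_sign.
Qed.

Lemma symplectic_mx_unit : J \in unitmx.
Proof.
have JJ : J *m (- J) = 1%:M by rewrite mulmxN symplectic_mx_sqr opprK.
by case: (mulmx1_unit JJ).
Qed.

Lemma pf_term_symplectic1 : pf_term J 1 = 1.
Proof.
rewrite /pf_term odd_perm1 expr0 mul1r.
by apply: big1 => k _; rewrite !perm1 mxE mate_ev eqxx odd_ev.
Qed.

Lemma pf_term_symplectic s : pf_term J s = 0 \/ pf_term J s = 1.
Proof.
have [/forallP Ps|] := boolP [forall k, s (od k) == mate (s (ev k))]; last first.
  rewrite negb_forall => /existsP [k nk]; left.
  by rewrite /pf_term (bigD1 k) //= mxE (negPf nk) mul0r mulr0.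
right; have Rs : respects_pairs s.
  by elim/pair_ind => k; rewrite ?mate_ev ?mate_od (eqP (Ps k)) ?mateK.
by rewrite (pf_term_respects_pairs symplectic_mx_skew Rs) pf_term_symplectic1.
Qed.

Lemma pf_sum_symplectic_gt0 : 0 < pf_sum J.
Proof.
rewrite /pf_sum (bigD1 1%g) //= pf_term_symplectic1 (lt_le_trans ltr01) // lerDl.
by apply: sumr_ge0 => s _; case: (pf_term_symplectic s) => ->; rewrite ?ler01.
Qed.

End StandardSymplectic.

Lemma sum_det_colsub (R : comPzRingType) n (M : 'M[R]_n)
    (F : {ffun 'I_n -> 'I_n} -> R) :
  \sum_(g : {ffun 'I_n -> 'I_n}) \det (colsub g M) * F g =
  \det M * \sum_(s : 'S_n) (-1) ^+ s * F (pval s).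
Proof.
rewrite (bigID (fun g : {ffun 'I_n -> 'I_n} => injectiveb g)) /=.
rewrite [X in _ + X]big1 ?addr0 => [|g /injectivePn [i1 [i2 ne_i12 eq_g12]]]; last first.
  rewrite -det_tr (determinant_alternate ne_i12) ?mul0r // => j.
  by rewrite !mxE eq_g12.
rewrite (reindex (@pval _)) /=; last first.
  by exists (insubd (1%g : 'S_n)) => [s _ | g g_inj]; [exact: valKd | exact: insubdK].
rewrite big_distrr; apply: eq_big => [s | s _]; first by rewrite (valP s).
have -> : colsub (pval s) M = col_perm s M by apply/matrixP => i j; rewrite !mxE pvalE.
by rewrite col_permE det_mulmx det_perm odd_permV -mulrA.
Qed.

Section PfaffianCongruence.
Variables (R : comPzRingType) (L : nat).
Local Notation m := (2 * L)%N.

Lemma big_distr_pairs (T : finType) (G : 'I_L -> T -> T -> R) :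
  \prod_(k < L) \sum_(a : T) \sum_(b : T) G k a b =
  \sum_(g : {ffun 'I_m -> T}) \prod_(k < L) G k (g (ev k)) (g (od k)).
Proof.
under eq_bigr => k _ do rewrite pair_bigA /=.
rewrite bigA_distr_bigA /=.
pose split_pairs (g : {ffun 'I_m -> T}) := [ffun k => (g (ev k), g (od k))].
pose merge_pairs (f : {ffun 'I_L -> T * T}) :=
  [ffun i : 'I_m => if odd i then (f (pair_idx i)).2 else (f (pair_idx i)).1].
rewrite (reindex split_pairs) /=; last first.
  apply: onW_bij; exists merge_pairs => [g | f]; apply/ffunP.
    by elim/pair_ind => k; rewrite !ffunE ?odd_ev ?odd_od ?pair_idx_ev ?pair_idx_od.
  by move=> k; rewrite !ffunE odd_ev odd_od pair_idx_ev pair_idx_od; case: (f k).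
by apply: eq_bigr => g _; apply: eq_bigr => k _; rewrite ffunE.
Qed.

Lemma pf_sum_congr (M A : 'M[R]_m) : pf_sum (M *m A *m M^T) = \det M * pf_sum A.
Proof.
have expand (s : 'S_m) : \prod_(k < L) (M *m A *m M^T) (s (ev k)) (s (od k)) =
    \sum_(g : {ffun 'I_m -> 'I_m})
      (\prod_(i < m) M (s i) (g i)) * \prod_(k < L) A (g (ev k)) (g (od k)).
  transitivity (\prod_(k < L) \sum_a \sum_b M (s (ev k)) a * A a b * M (s (od k)) b).
    apply: eq_bigr => k _; rewrite mxE exchange_big /=; apply: eq_bigr => b _.
    by rewrite !mxE big_distrl.
  rewrite big_distr_pairs; apply: eq_bigr => g _.
  by rewrite big_pairs -big_split; apply: eq_bigr => k _; rewrite mulrAC.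
have leibniz (g : {ffun 'I_m -> 'I_m}) : \sum_(s : 'S_m) (-1) ^+ s *
    ((\prod_(i < m) M (s i) (g i)) * \prod_(k < L) A (g (ev k)) (g (od k))) =
    \det (colsub g M) * \prod_(k < L) A (g (ev k)) (g (od k)).
  rewrite -det_tr big_distrl; apply: eq_bigr => s _ /=; rewrite mulrA.
  by congr (_ * _ * _); apply: eq_bigr => i _; rewrite !mxE.
rewrite /pf_sum /pf_term.
under eq_bigr => s _ do rewrite expand big_distrr.
rewrite exchange_big; under eq_bigr => g _ do rewrite leibniz.
by rewrite sum_det_colsub; under eq_bigr => s _ do rewrite pvalE.
Qed.

End PfaffianCongruence.

Section SkewCongruence.
Variable R : numFieldType.

Definition congruent n (A B : 'M[R]_n) := exists M, M \in unitmx /\ B = M *m A *m M^T.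

Lemma congruent_trans n (A B C : 'M[R]_n) :
  congruent A B -> congruent B C -> congruent A C.
Proof.
move=> [M [uM ->]] [N [uN ->]]; exists (N *m M).
by rewrite unitmx_mul uN uM trmx_mul !mulmxA.
Qed.

Lemma congruent_sym n (A B : 'M[R]_n) : congruent A B -> congruent B A.
Proof.
move=> [M [uM ->]]; exists (invmx M); split; first by rewrite unitmx_inv.
rewrite trmx_inv !mulmxA mulVmx // mul1mx -mulmxA mulmxV ?unitmx_tr //.
by rewrite mulmx1.
Qed.

Lemma congruent_skew n (A B : 'M[R]_n) : congruent A B -> A^T = - A -> B^T = - B.
Proof.
by move=> [M [_ ->]] skA; rewrite !trmx_mul trmxK skA mulNmx mulmxN mulmxA.
Qed.

Lemma congruent_unitmx n (A B : 'M[R]_n) :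
  congruent A B -> A \in unitmx -> B \in unitmx.
Proof. by move=> [M [uM ->]] uA; rewrite !unitmx_mul uM uA unitmx_tr. Qed.

Lemma congruent_block n1 n2 (U : 'M[R]_n1) (D D' : 'M[R]_n2) :
  congruent D D' -> congruent (block_mx U 0 0 D) (block_mx U 0 0 D').
Proof.
move=> [N [uN ->]]; exists (block_mx 1%:M 0 0 N); split.
  by rewrite unitmxE det_ublock det1 mul1r -unitmxE.
rewrite tr_block_mx trmx1 !trmx0 !mulmx_block.
by rewrite !(mul1mx, mul0mx, mulmx1, mulmx0, addr0, add0r).
Qed.

Lemma skew_diag n (A : 'M[R]_n) i : A^T = - A -> A i i = 0.
Proof.
move=> skA; have Aii := skew_entry i i skA.
have : A i i *+ 2 = 0 by rewrite mulr2n {1}Aii addNr.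
by move/eqP; rewrite mulrn_eq0 /= => /eqP.
Qed.

Lemma skew_schur_congruent p n (C : 'M[R]_(p + n)) :
  C^T = - C -> C \in unitmx -> ulsubmx C \in unitmx ->
  exists D, [/\ D^T = - D, D \in unitmx & congruent C (block_mx (ulsubmx C) 0 0 D)].
Proof.
move=> skC uC uU; set U := ulsubmx C.
pose P : 'M[R]_(p + n) := block_mx 1%:M 0 (- (dlsubmx C *m invmx U)) 1%:M.
have cCZ : congruent C (P *m C *m P^T).
  by exists P; rewrite unitmxE det_lblock !det1 mulr1 unitr1.
set Z := P *m C *m P^T in cCZ.
have ulZ : ulsubmx Z = U.
  rewrite /Z -[C]submxK /P tr_block_mx !mulmx_block block_mxKul trmx1 trmx0.
  by rewrite !(mul1mx, mul0mx, mulmx1, mulmx0, addr0).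
have dlZ : dlsubmx Z = 0.
  rewrite /Z -[C]submxK /P tr_block_mx !mulmx_block block_mxKdl trmx1 trmx0.
  by rewrite !(mul1mx, mul0mx, mulmx1, mulmx0, addr0) mulNmx -mulmxA mulVmx // mulmx1 addNr.
have ZE : Z = block_mx U (ursubmx Z) 0 (drsubmx Z) by rewrite -{1}[Z]submxK ulZ dlZ.
have := congruent_skew cCZ skC; rewrite ZE tr_block_mx opp_block_mx trmx0.
move=> /eq_block_mx [_ ur0 _ skD]; move: ZE; rewrite -[ursubmx Z]opprK -ur0 oppr0 => ZE.
exists (drsubmx Z); split => //; last by rewrite -ZE; exact: cCZ.
move: (congruent_unitmx cCZ uC).
by rewrite {1}ZE !unitmxE det_ublock unitrM => /andP[].
Qed.

Lemma unitmx_row_neq0 n (A : 'M[R]_n) i : A \in unitmx -> exists j, A i j != 0.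
Proof.
move=> uA; apply/existsP; apply: contraTT uA => /existsPn Ai0.
rewrite unitmxE (expand_det_row _ i) big1 ?unitr0 // => j _.
by move/negbNE/eqP: (Ai0 j) => ->; rewrite mul0r.
Qed.

Lemma skew_congruent_entry01 n (A : 'M[R]_(2 + n)) : A^T = - A -> A \in unitmx ->
  exists2 B, congruent A B & ulsubmx B 0 1 = 1.
Proof.
move=> skA uA; set i0 := lshift n (0 : 'I_2); set i1 := lshift n (1 : 'I_2).
have [j Aj] := unitmx_row_neq0 i0 uA.
have j0 : j != i0 by apply: contraNneq Aj => ->; rewrite skew_diag.
pose s := tperm i1 j.
pose d := \row_i (if i == i0 then (A i0 j)^-1 else 1) : 'rV[R]_(2 + n).
pose N := diag_mx d *m perm_mx s.
exists (N *m A *m N^T).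
  exists N; split => //; rewrite unitmx_mul !unitmxE det_perm det_diag !unitfE.
  rewrite signr_eq0 andbT; apply/prodf_neq0 => i _; rewrite mxE.
  by case: (i == i0); rewrite ?invr_eq0 ?oner_eq0.
have -> : N *m A *m N^T = diag_mx d *m (perm_mx s *m A *m (perm_mx s)^T) *m (diag_mx d)^T.
  by rewrite /N trmx_mul !mulmxA.
rewrite tr_diag_mx mul_diag_mx mul_mx_diag -row_permE tr_perm_mx -col_permE !mxE -/i0 -/i1.
by rewrite /s tpermL tpermD // eqxx mulr1 mulVf.
Qed.

Lemma skew_mx2_eq (U V : 'M[R]_2) : U^T = - U -> V^T = - V -> U 0 1 = V 0 1 -> U = V.
Proof.
move=> skU skV UV01.
have ord2 (i : 'I_2) : i = 0 \/ i = 1.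
  by case: i => [[|[|i]] //] lti; [left | right]; apply: val_inj.
apply/matrixP => i j; case: (ord2 i) (ord2 j) => -> [] ->; rewrite ?skew_diag //.
by rewrite (skew_entry _ _ skU) (skew_entry _ _ skV) UV01.
Qed.

Local Notation J2 := (symplectic_mx R 1 : 'M_2).

Lemma skew_normal_form n (A : 'M[R]_(2 + n)) : A^T = - A -> A \in unitmx ->
  exists D, [/\ D^T = - D, D \in unitmx & congruent A (block_mx J2 0 0 D)].
Proof.
move=> skA uA; have [B cAB B01] := skew_congruent_entry01 skA uA.
have skB := congruent_skew cAB skA.
have skulB : (ulsubmx B)^T = - ulsubmx B.
  by apply/matrixP => i j; rewrite !mxE (skew_entry _ _ skB).
have ulB : ulsubmx B = J2.
  by apply: skew_mx2_eq skulB (symplectic_mx_skew R 1) _; rewrite B01 mxE.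
have [|D [skD uD cBD]] := skew_schur_congruent skB (congruent_unitmx cAB uA).
  by rewrite ulB; exact: (symplectic_mx_unit R 1).
by exists D; split => //; apply: congruent_trans cAB _; rewrite -ulB.
Qed.

Lemma skew_unitmx_congruent n (A B : 'M[R]_n) :
  A^T = - A -> B^T = - B -> A \in unitmx -> B \in unitmx -> congruent A B.
Proof.
elim/ltn_ind: n A B => -[|[|n]] IH A B skA skB uA uB.
- exists 1%:M; split; first exact: unitmx1.
  by rewrite (flatmx0 A) (flatmx0 B) mulmx0 mul0mx.
- by move: uA; rewrite unitmxE det_mx11 skew_diag // unitr0.
have [D [skD uD cAD]] := skew_normal_form skA uA.
have [D' [skD' uD' cBD']] := skew_normal_form skB uB.
apply: congruent_trans cAD _; apply: congruent_trans (congruent_sym cBD').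
by apply/congruent_block/IH.
Qed.

End SkewCongruence.

Lemma pfaffianE (R : comUnitRingType) L (A : 'M[R]_(2 * L)) :
  pfaffian A = pf_sum A / ((2 ^ (2 * L)./2)%N%:R * (((2 * L)./2)`!)%:R).
Proof.
congr (_ / _); apply: eq_bigr => s _; congr (_ * _).
rewrite (big_even _ (fun i => A (s i) (s (ord_succ i)))).
by apply: eq_bigr => k _; rewrite ord_succ_ev.
Qed.

Lemma pfaffian_congr (R : comUnitRingType) L (M A : 'M[R]_(2 * L)) :
  pfaffian (M *m A *m M^T) = \det M * pfaffian A.
Proof. by rewrite !pfaffianE pf_sum_congr mulrA. Qed.

Lemma pfaffian_skew_neq0 (R : numFieldType) L (A : 'M[R]_(2 * L)) :
  A^T = - A -> A \in unitmx -> pfaffian A != 0.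
Proof.
move=> skA uA; have [N [uN ->]] := skew_unitmx_congruent
  (symplectic_mx_skew R L) skA (symplectic_mx_unit R L) uA.
rewrite pfaffianE pf_sum_congr !mulf_neq0 //.
- by rewrite -unitfE -unitmxE.
- by rewrite gt_eqF ?pf_sum_symplectic_gt0.
- by rewrite invr_eq0 mulf_neq0 // pnatr_eq0 -lt0n ?expn_gt0 ?fact_gt0.
Qed.

Theorem proposition3p3 (R : realType) (L : nat) (hL : (0 < L)%N)
  (A0 A1 : 'M[R]_(2 * L)) :
  skew_sym A0 -> skew_sym A1 -> strictly_positive A0 -> strictly_positive A1 ->
  (kitaev_index A0 = kitaev_index A1 <-> Sf2 A0 A1 = 1).
Proof.
move=> skA0 skA1 uA0 uA1; rewrite /kitaev_index /Sf2.
have := epsilon_spec (inhabits 0) _ (skew_unitmx_congruent skA0 skA1 uA0 uA1).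
set M := epsilon _ _ => -[uM A1E].
have sg0 : Num.sg (pfaffian A0) != 0 by rewrite sgr_eq0 pfaffian_skew_neq0.
rewrite A1E pfaffian_congr (sgrM (\det M)); split => [|-> ]; last by rewrite mul1r.
by rewrite -{1}[Num.sg (pfaffian A0)]mul1r => /mulIf-/(_ sg0).
Qed.
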